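(* Let $\mathbb{X}$ be a topological space with viable base $\Omega_0$, $\iota:X\to\widehat{X}$ the canonical map, and $\mathbb{D}$ a bc-domain with basis $D_0$. The map $\gamma:\widehat{\mathbb{B}}\to\mathbb{B}_{\mathrm{abs}}$, $\gamma(f)=f\circ\iota$, is a bijection with $\gamma\big(\bigsqcup_{i}b_i\chi_{\mathcal{O}_{{\downarrow}W_i}}\big)=\bigsqcup_i b_i\chi_{W_i}$, and for all $f,g\in\widehat{\mathbb{B}}$: $f\ll g$ (in $[\widehat{\mathbb{X}}_{\Omega_0}\to\mathbb{D}]$) if and only if $\gamma(f)\prec\gamma(g)$.
   Context: A viable base of $\mathbb{X}=(X,\tau_{\mathbb{X}})$ is a family $\Omega_0\subseteq\tau_{\mathbb{X}}$ closed under finite unions and finite intersections (so $\emptyset,X\in\Omega_0$) which is a base of $\tau_{\mathbb{X}}$. ${\downarrow}W=\{U\in\Omega_0:U\subseteq W\}$; $\mathrm{Idl}(\Omega_0)$ is the complete lattice of ideals (nonempty, downward closed, directed subsets) of $(\Omega_0,\subseteq)$. $\widehat{\mathbb{X}}_{\Omega_0}$ is the set $\widehat{X}$ of completely prime filters of $\mathrm{Idl}(\Omega_0)$ (nonempty upward closed sets closed under binary meets with $\bigvee A\in F\Rightarrow A\cap F\neq\emptyset$), topologized by open sets $\mathcal{O}_I=\{y:I\in y\}$; $\iota(x)=\{I: x\in\bigcup I\}$. A bc-domain is a continuous dcpo with least element $\bot$ in which bounded subsets have joins; $\ll$ is way-below; $\twoheaduparrow b=\{d:b\ll d\}$. $b\chi_O$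 has value $b$ on $O$ and $\bot$ elsewhere; a family $\{b_i\chi_{O_i}\}_{i\in I}$ is consistent if for every $J\subseteq I$ with $\bigcap_{j\in J}O_j\neq\emptyset$ the $b_j$ ($j\in J$) have an upper bound; joins are pointwise. $\widehat{\mathbb{B}}$ = pointwise joins of finite consistent families $b_i\chi_{\mathcal{O}_{{\downarrow}W_i}}$ with $W_i\in\Omega_0$, $b_i\in D_0$ (functions on $\widehat{X}$). $\mathbb{B}_{\mathrm{abs}}$ = pointwise joins of finite consistent families $b_i\chi_{O_i}$ with $O_i\in\Omega_0$, $b_i\in D_0$ (functions on $X$). The relation $\prec$ on $\mathbb{B}_{\mathrm{abs}}$: $\bigsqcup_{i\in I}b_i\chi_{O_i}\prec h$ iff $O_i\subseteq h^{-1}(\twoheaduparrow b_i)$ for all $i\in I$. *)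

From HB Require Import structures.
From mathcomp Require Import all_boot all_order.
From mathcomp Require Import boolp classical_sets topology.
From Stdlib Require Import Classical.

Set Implicit Arguments.
Unset Strict Implicit.
Unset Printing Implicit Defensive.

Import Order.TTheory.
Local Open Scope classical_set_scope.

Definition directed_rel (T : Type) (le : T -> T -> Prop) (A : set T) : Prop :=
  (exists a, A a) /\
  (forall a b, A a -> A b -> exists c, A c /\ le a c /\ le b c).

Definition is_lub_in (T : Type) (le : T -> T -> Prop) (S A : set T) (s : T) : Prop :=
  S s /\ (forall a, A a -> le a s) /\
  (forall u, S u -> (forall a, A a -> le a u) -> le s u).

Definition way_below_in (T : Type) (le : T -> T -> Prop) (S : set T) (x y : T) : Prop :=
  forall A : set T, A `<=` S -> directed_rel le A ->
  forall s, is_lub_in le S A s -> le y s -> exists a, A a /\ le x a.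

Section Domain.
Context {d : Order.disp_t} {D : bPOrderType d}.

Definition leD (x y : D) : Prop := (x <= y)%O.

Definition dlub (A : set D) (s : D) : Prop := is_lub_in leD setT A s.

Definition way_below (x y : D) : Prop := way_below_in leD setT x y.

Definition is_dcpo : Prop :=
  forall A : set D, directed_rel leD A -> exists s, dlub A s.

Definition is_basis (D0 : set D) : Prop :=
  forall x : D,
    directed_rel leD [set b | D0 b /\ way_below b x] /\
    dlub [set b | D0 b /\ way_below b x] x.

Definition bounded_complete : Prop :=
  forall A : set D, (exists u, forall a, A a -> leD a u) -> exists s, dlub A s.

(* bc-domain with basis D0 (the least element is \bot of bPOrderType) *)
Definition is_bc_domain (D0 : set D) : Prop :=
  is_dcpo /\ is_basis D0 /\ bounded_complete.

Definition scott_open (U : set D) : Prop :=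
  (forall x y, U x -> leD x y -> U y) /\
  (forall A : set D, directed_rel leD A -> forall s, dlub A s -> U s ->
     exists a, A a /\ U a).

Definition consistent_family (T : Type) (n : nat) (b : 'I_n -> D)
    (O : 'I_n -> set T) : Prop :=
  forall J : set 'I_n, (exists t, forall j, J j -> O j t) ->
    exists u, forall j, J j -> leD (b j) u.

(* f is the pointwise join of the family b_i chi_{O_i} *)
Definition is_step_join (T : Type) (n : nat) (b : 'I_n -> D)
    (O : 'I_n -> set T) (f : T -> D) : Prop :=
  forall t, dlub [set c | exists i, O i t /\ c = b i] (f t).

End Domain.

Definition viable_base (X : topologicalType) (Om : set (set X)) : Prop :=
  (forall U, Om U -> open U) /\
  Om set0 /\ Om setT /\
  (forall U V, Om U -> Om V -> Om (U `|` V)) /\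
  (forall U V, Om U -> Om V -> Om (U `&` V)) /\
  (forall U : set X, open U -> forall x, U x -> exists B, Om B /\ B x /\ B `<=` U).

Definition downset (X : Type) (Om : set (set X)) (W : set X) : set (set X) :=
  [set U | Om U /\ U `<=` W].

Definition is_ideal (X : Type) (Om : set (set X)) (I : set (set X)) : Prop :=
  I `<=` Om /\ (exists U, I U) /\
  (forall U V, I V -> Om U -> U `<=` V -> I U) /\
  (forall U V, I U -> I V -> exists W, I W /\ U `<=` W /\ V `<=` W).

Definition ideal_join (X : Type) (Om : set (set X)) (A : set (set (set X)))
    (J : set (set X)) : Prop :=
  is_ideal Om J /\ (forall I, A I -> I `<=` J) /\
  (forall K, is_ideal Om K -> (forall I, A I -> I `<=` K) -> J `<=` K).

(* completely prime filters of Idl(Om); the meet of two ideals is their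
   intersection *)
Definition is_cpf (X : Type) (Om : set (set X)) (y : set (set (set X))) : Prop :=
  (forall I, y I -> is_ideal Om I) /\
  (exists I, y I) /\
  (forall I J, y I -> is_ideal Om J -> I `<=` J -> y J) /\
  (forall I J, y I -> y J -> y (I `&` J)) /\
  (forall (A : set (set (set X))) J, (forall I, A I -> is_ideal Om I) ->
     ideal_join Om A J -> y J -> exists I, A I /\ y I).

Definition Xhat (X : Type) (Om : set (set X)) :=
  {y : set (set (set X)) | is_cpf Om y}.
Arguments Xhat {X} Om.

Definition Ohat (X : Type) (Om : set (set X)) (I : set (set X)) : set (Xhat Om) :=
  [set y | proj1_sig y I].
Arguments Ohat {X} Om I _.

Definition open_hat (X : Type) (Om : set (set X)) (V : set (Xhat Om)) : Prop :=
  forall y, V y -> exists I, is_ideal Om I /\ Ohat Om I y /\ Ohat Om I `<=` V.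
Arguments open_hat {X} Om V.

Definition iota_set (X : Type) (Om : set (set X)) (x : X) : set (set (set X)) :=
  [set I | is_ideal Om I /\ exists U, I U /\ U x].
Arguments iota_set {X} Om x _.

Lemma iota_cpf (X : topologicalType) (Om : set (set X)) :
  viable_base Om -> forall x, is_cpf Om (iota_set Om x).
Proof.
move=> [_ [H0 [HT [HU [HI _]]]]] x.
have idI : forall I J, is_ideal Om I -> is_ideal Om J -> is_ideal Om (I `&` J).
  move=> I J [I1 [[U0 HU0] [I3 I4]]] [J1 [[V0 HV0] [J3 J4]]].
  split; [by move=> U [/I1]|].
  split; [exists set0; split; [apply: (I3 _ U0)|apply: (J3 _ V0)] => //; by move=> ?|].
  split; [by move=> U V [HVI HVJ] HO HUV; split; [apply: (I3 _ V)|apply: (J3 _ V)]|].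
  move=> U V [HUI HUJ] [HVI HVJ].
  have [W1 [W1I [UW1 VW1]]] := I4 _ _ HUI HVI.
  have [W2 [W2J [UW2 VW2]]] := J4 _ _ HUJ HVJ.
  have HUV : Om (U `|` V) by apply: HU; apply: I1.
  exists (U `|` V); split; [split|split].
  - apply: (I3 _ W1) => //; by move=> z [/UW1|/VW1].
  - apply: (J3 _ W2) => //; by move=> z [/UW2|/VW2].
  - by move=> z Hz; left.
  - by move=> z Hz; right.
split; [by move=> I []|].
split.
  exists Om; split; [split; [by []|split; [by exists set0|split; [by []|]]]|].
    by move=> U V HUo HVo; exists (U `|` V); split; [apply: HU|split=> z Hz; [left|right]].
  by exists setT.
split.
  move=> I J [HIi [U [HUI HUx]]] HJ HIJ; split => //; exists U; split => //; exact: HIJ.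
split.
  move=> I J [HIi [U [HUI HUx]]] [HJi [V [HVJ HVx]]]; split; first exact: idI.
  have [I1 [_ [I3 _]]] := HIi; have [J1 [_ [J3 _]]] := HJi.
  have HUV : Om (U `&` V) by apply: HI; [apply: I1|apply: J1].
  exists (U `&` V); split; last by split.
  split.
  - by apply: (I3 _ U) => // z [].
  - by apply: (J3 _ V) => // z [].
move=> A J HA [HJi [HJub HJl]] [_ [U [HUJ HUx]]].
apply: NNPP => Hno.
pose K : set (set X) := [set V | Om V /\ ~ V x].
have HK : is_ideal Om K.
  split; [by move=> V []|].
  split; [by exists set0; split|].
  split; [by move=> V W [_ HW] HV HVW; split => // /HVW|].
  move=> V W [HVo HVx] [HWo HWx]; exists (V `|` W); split.
    by split; [apply: HU|case].
  by split=> z Hz; [left|right].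
have : J `<=` K.
  apply: HJl => // I HAI V HVI; have [I1 _] := HA _ HAI.
  split; first exact: I1.
  move=> HVx; apply: Hno; exists I; split => //; split; first exact: HA.
  by exists V.
by move=> /(_ U HUJ) [].
Qed.

Definition iota_hat (X : topologicalType) (Om : set (set X)) (HOm : viable_base Om)
    (x : X) : Xhat Om :=
  exist _ (iota_set Om x) (iota_cpf HOm x).

Section Functions.
Context {d : Order.disp_t} {D : bPOrderType d}.

Definition cont_hat (X : Type) (Om : set (set X)) (f : Xhat Om -> D) : Prop :=
  forall U : set D, scott_open U -> open_hat Om (f @^-1` U).

Definition fle (T : Type) (f g : T -> D) : Prop := forall t, leD (f t) (g t).

Definition way_below_fs (X : Type) (Om : set (set X)) (f g : Xhat Om -> D) : Prop :=
  way_below_in (@fle (Xhat Om)) (@cont_hat X Om) f g.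

Definition in_Bhat (X : Type) (Om : set (set X)) (D0 : set D)
    (f : Xhat Om -> D) : Prop :=
  exists n (b : 'I_n -> D) (W : 'I_n -> set X),
    (forall i, Om (W i) /\ D0 (b i)) /\
    consistent_family b (fun i => Ohat Om (downset Om (W i))) /\
    is_step_join b (fun i => Ohat Om (downset Om (W i))) f.

Definition in_Babs (X : Type) (Om : set (set X)) (D0 : set D) (h : X -> D) : Prop :=
  exists n (b : 'I_n -> D) (O : 'I_n -> set X),
    (forall i, Om (O i) /\ D0 (b i)) /\
    consistent_family b O /\ is_step_join b O h.

(* (join_i b_i chi_{O_i}) prec k  iff  O_i <= k^{-1}(upup b_i) for all i *)
Definition prec_abs (X : Type) (Om : set (set X)) (D0 : set D) (h k : X -> D) : Prop :=
  exists n (b : 'I_n -> D) (O : 'I_n -> set X),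
    (forall i, Om (O i) /\ D0 (b i)) /\
    consistent_family b O /\ is_step_join b O h /\
    (forall i, O i `<=` k @^-1` [set e | way_below (b i) e]).

End Functions.

Arguments in_Bhat {d D X} Om D0 f.
Arguments in_Babs {d D X} Om D0 h.
Arguments prec_abs {d D X} Om D0 h k.
Arguments way_below_fs {d D X} Om f g.
Arguments cont_hat {d D X} Om f.

(* A point y of the spectrum is determined by the basic opens U with
   y in O_{down U}, and these form a prime filter of Om.  Two facts about such
   points carry the argument.  Finitely many basic opens cannot separate y from
   every point iota x of X, because the Boolean combination they cut out is a
   basic open in y minus a finite union of basic opens outside y, hence nonempty.
   And by the prime filter theorem, an ideal of Om missing a basic open W is
   avoided by some y in O_{down W}.  The first fact gives the formula for gamma
   and its injectivity, and with bounded completeness its surjectivity.  For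
   way-below: if f << g then f y << g y everywhere, since g is the directed join
   of the locally constant maps pointwise way below it; conversely, if b_i is
   way below g (iota x) for x in W_i, the basic opens on which b_i is dominated
   by a single member of a directed family above g form an ideal, which by the
   second fact contains W_i, so one member of the family dominates f. *)

From HB Require Import structures.
From mathcomp Require Import all_boot all_order.
From mathcomp Require Import boolp classical_sets topology.
From Stdlib Require Import Classical.

Set Implicit Arguments.
Unset Strict Implicit.
Unset Printing Implicit Defensive.
Import Order.TTheory.
Local Open Scope classical_set_scope.

Lemma directed_finite_ub (T : Type) (le : T -> T -> Prop) (A : set T) :
  (forall x y z, le x y -> le y z -> le x z) -> directed_rel le A ->
  forall n (a : 'I_n -> T), (forall i, A (a i)) -> exists c, A c /\ forall i, le (a i) c.
Proof.
move=> le_trans [[c0 Ac0] dirA] n a Aa.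
suff /(_ (enum 'I_n)) [c [Ac ac]] : forall s : seq 'I_n,
    exists c, A c /\ forall i, i \in s -> le (a i) c.
  by exists c; split => // i; apply: ac; rewrite mem_enum.
elim=> [|j s [c [Ac ac]]]; first by exists c0.
have [c' [Ac' [le_cc' le_jc']]] := dirA _ _ Ac (Aa j).
exists c'; split => // i; rewrite in_cons => /orP [/eqP -> //|si].
exact: le_trans (ac i si) le_cc'.
Qed.

Section DomainTheory.
Context {d : Order.disp_t} {D : bPOrderType d}.
Implicit Types (x y z : D) (A : set D).

Lemma leD_refl x : leD x x.
Proof. exact: lexx. Qed.

Lemma leD_trans x y z : leD x y -> leD y z -> leD x z.
Proof. exact: le_trans. Qed.

Lemma leD_anti x y : leD x y -> leD y x -> x = y.
Proof. by move=> lexy leyx; apply: le_anti; rewrite /leD in lexy leyx; rewrite lexy leyx. Qed.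

Lemma leD_bot x : leD \bot%O x.
Proof. exact: le0x. Qed.

Lemma dlub_ub A s a : dlub A s -> A a -> leD a s.
Proof. by move=> [_ [ub _]] /ub. Qed.

Lemma dlub_least A s u : dlub A s -> (forall a, A a -> leD a u) -> leD s u.
Proof. by move=> [_ [_ least]] ubu; apply: least. Qed.

Lemma dlub_unique A s t : dlub A s -> dlub A t -> s = t.
Proof.
move=> lubs lubt; apply: leD_anti.
- exact: dlub_least lubs (fun a => dlub_ub lubt).
- exact: dlub_least lubt (fun a => dlub_ub lubs).
Qed.

Lemma way_below_le x y : way_below x y -> leD x y.
Proof.
move=> xy; have dir : directed_rel leD [set y].
  split; first by exists y.
  by move=> a b -> ->; exists y; split => //; split; apply: leD_refl.
have lub : is_lub_in leD setT [set y] y.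
  split => //; split; first by move=> a ->; apply: leD_refl.
  by move=> u _; apply.
by have [a [-> //]] := xy [set y] (fun _ _ => I) dir y lub (leD_refl y).
Qed.

Lemma le_way_below_trans x y z : leD x y -> way_below y z -> way_below x z.
Proof.
move=> lexy yz A SA dirA s lubs lezs; have [a [Aa leya]] := yz A SA dirA s lubs lezs.
by exists a; split => //; apply: leD_trans leya.
Qed.

Lemma way_below_le_trans x y z : way_below x y -> leD y z -> way_below x z.
Proof. by move=> xy leyz A SA dirA s lubs lezs; apply: xy lubs (leD_trans leyz lezs). Qed.

Lemma way_below_bot x : way_below \bot%O x.
Proof. by move=> A _ [[a Aa] _] s _ _; exists a; split => //; apply: leD_bot. Qed.

Lemma way_below_join x1 x2 z j : way_below x1 z -> way_below x2 z ->
  dlub [set c | c = x1 \/ c = x2] j -> way_below j z.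
Proof.
move=> x1z x2z lubj A SA dirA s lubs lezs.
have [a1 [Aa1 le1]] := x1z A SA dirA s lubs lezs.
have [a2 [Aa2 le2]] := x2z A SA dirA s lubs lezs.
have [c [Ac [le1c le2c]]] := dirA.2 _ _ Aa1 Aa2.
exists c; split => //; apply: (dlub_least lubj) => e [->|->].
- exact: leD_trans le1c.
- exact: leD_trans le2c.
Qed.

Variable D0 : set D.
Hypothesis basisD0 : is_basis D0.

Lemma way_below_interpolate x z : way_below x z ->
  exists c, D0 c /\ way_below x c /\ way_below c z.
Proof.
move=> xz.
(* [z] is the directed join of the basis elements way below some basis
   element way below [z]. *)
pose M := [set c | D0 c /\ exists c', D0 c' /\ way_below c c' /\ way_below c' z].
have dirM : directed_rel leD M.
  have [[[c' [D0c' c'z]] dir_z] _] := basisD0 z.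
  split.
    by have [[[c [D0c cc']] _] _] := basisD0 c'; exists c; split => //; exists c'.
  move=> a1 a2 [Da1 [c1 [D1 [a1c1 c1z]]]] [Da2 [c2 [D2 [a2c2 c2z]]]].
  have [c3 [[D3 c3z] [le13 le23]]] := dir_z c1 c2 (conj D1 c1z) (conj D2 c2z).
  have [[_ dir3] _] := basisD0 c3.
  have [c [[D0c cc3] [le1 le2]]] := dir3 a1 a2
    (conj Da1 (way_below_le_trans a1c1 le13)) (conj Da2 (way_below_le_trans a2c2 le23)).
  by exists c; split => //; split => //; exists c3.
have lubM : dlub M z.
  split => //; split.
    move=> a [_ [c' [_ [ac' c'z]]]].
    exact: leD_trans (way_below_le ac') (way_below_le c'z).
  move=> u _ ubu; have [_ lubz] := basisD0 z.
  apply: (dlub_least lubz) => c' [D0c' c'z]; have [_ lubc'] := basisD0 c'.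
  by apply: (dlub_least lubc') => c [D0c cc']; apply: ubu; split => //; exists c'.
have [c [[_ [c' [D0c' [cc' c'z]]]] lexc]] := xz M (fun _ _ => I) dirM z lubM (leD_refl z).
by exists c'; split => //; split => //; apply: le_way_below_trans lexc cc'.
Qed.

Lemma way_below_scott_open x : scott_open [set e | way_below x e].
Proof.
split; first by move=> y z /= xy; apply: way_below_le_trans.
move=> A dirA s lubs /= xs; have [c [_ [xc cs]]] := way_below_interpolate xs.
have [a [Aa leca]] := cs A (fun _ _ => I) dirA s lubs (leD_refl s).
by exists a; split => //; apply: way_below_le_trans leca.
Qed.

End DomainTheory.

Section Spectrum.
Variables (X : topologicalType) (Om : set (set X)).
Hypothesis HOm : viable_base Om.

Lemma viable_base_set0 : Om set0. Proof. exact: HOm.2.1. Qed.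
Lemma viable_base_setT : Om setT. Proof. exact: HOm.2.2.1. Qed.
Lemma viable_base_setU U V : Om U -> Om V -> Om (U `|` V).
Proof. exact: HOm.2.2.2.1. Qed.
Lemma viable_base_setI U V : Om U -> Om V -> Om (U `&` V).
Proof. exact: HOm.2.2.2.2.1. Qed.
#[local] Hint Resolve viable_base_set0 viable_base_setT : core.
Implicit Types (U V W Z : set X) (F G I J K : set (set X)) (y : Xhat Om).

Lemma ideal0 I : is_ideal Om I -> I set0.
Proof. by move=> [_ [[U IU] [Idown _]]]; apply: (Idown _ U IU viable_base_set0). Qed.

Lemma idealU I U V : is_ideal Om I -> I U -> I V -> I (U `|` V).
Proof.
move=> [IOm [_ [Idown Idir]]] IU IV.
have [W [IW [UW VW]]] := Idir _ _ IU IV.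
apply: (Idown _ W) => //; first by apply: viable_base_setU; apply: IOm.
by move=> z [/UW|/VW].
Qed.

Lemma idealI I J : is_ideal Om I -> is_ideal Om J -> is_ideal Om (I `&` J).
Proof.
move=> idI idJ; have [IOm [_ [Idown _]]] := idI; have [_ [_ [Jdown _]]] := idJ.
split; first by move=> U [/IOm].
split; first by exists set0; split; apply: ideal0.
split; first by move=> U V [IV JV] OmU UV; split; [apply: (Idown _ V)|apply: (Jdown _ V)].
move=> U V [IU JU] [IV JV]; exists (U `|` V).
by split; [split; apply: idealU|split=> z Hz; [left|right]].
Qed.

Lemma downset_ideal W : Om W -> is_ideal Om (downset Om W).
Proof.
move=> OmW.
split; first by move=> U [].
split; first by exists set0; split.
split; first by move=> U V [_ VW] OmU UV; split => // z /UV /VW.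
move=> U V [OmU UW] [OmV VW]; exists (U `|` V).
by split; [split; [apply: viable_base_setU|move=> z [/UW|/VW]]|split=> z Hz; [left|right]].
Qed.

Lemma Om_ideal : is_ideal Om Om.
Proof.
split => //; split; first by exists set0.
split => // U V OmU OmV; exists (U `|` V).
by split; [apply: viable_base_setU|split=> z Hz; [left|right]].
Qed.

Lemma Ohat_ideal y I : Ohat Om I y -> is_ideal Om I.
Proof. exact: (proj2_sig y).1 I. Qed.

Lemma OhatS y I J : Ohat Om I y -> is_ideal Om J -> I `<=` J -> Ohat Om J y.
Proof. exact: (proj2_sig y).2.2.1 I J. Qed.

Lemma OhatI y I J : Ohat Om I y -> Ohat Om J y -> Ohat Om (I `&` J) y.
Proof. exact: (proj2_sig y).2.2.2.1 I J. Qed.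

Lemma Ohat_prime y (A : set (set (set X))) J : (forall I, A I -> is_ideal Om I) ->
  ideal_join Om A J -> Ohat Om J y -> exists I, A I /\ Ohat Om I y.
Proof. exact: (proj2_sig y).2.2.2.2 A J. Qed.

Lemma Ohat_Om y : Ohat Om Om y.
Proof.
have [I yI] : exists I, Ohat Om I y := (proj2_sig y).2.1.
by apply: (OhatS yI Om_ideal); have [] := Ohat_ideal yI.
Qed.

Definition hat U : set (Xhat Om) := Ohat Om (downset Om U).

Lemma hatT y : hat setT y.
Proof.
by apply: OhatS (Ohat_Om y) (downset_ideal viable_base_setT) _ => U OmU; split.
Qed.

Lemma hat0 y : ~ hat set0 y.
Proof.
move=> y0.
have join0 : ideal_join Om set0 (downset Om set0).
  split; first exact: downset_ideal.
  split => // K idK _ U [_ U0].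
  have -> : U = set0 by apply/seteqP; split => // z /U0.
  exact: ideal0.
by have [I [[] _]] := Ohat_prime (A := set0) (fun I (A0 : set0 I) => match A0 with end) join0 y0.
Qed.

Lemma hatS y U V : Om V -> hat U y -> U `<=` V -> hat V y.
Proof.
move=> OmV yU UV; apply: OhatS yU (downset_ideal OmV) _.
by move=> W [OmW WU]; split => // z /WU /UV.
Qed.

Lemma hatI y U V : Om U -> Om V -> hat U y -> hat V y -> hat (U `&` V) y.
Proof.
move=> OmU OmV yU yV.
apply: OhatS (OhatI yU yV) (downset_ideal (viable_base_setI OmU OmV)) _.
by move=> W [[OmW WU] [_ WV]]; split => // z Wz; split; [apply: WU|apply: WV].
Qed.

Lemma hatU y U V : Om U -> Om V -> hat (U `|` V) y -> hat U y \/ hat V y.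
Proof.
move=> OmU OmV yUV.
pose A := [set I | I = downset Om U \/ I = downset Om V].
have idA : forall I, A I -> is_ideal Om I by move=> I [->|->]; apply: downset_ideal.
have joinA : ideal_join Om A (downset Om (U `|` V)).
  split; first exact/downset_ideal/viable_base_setU.
  split; first by move=> I [->|->] W [OmW WU]; split => // z /WU; [left|right].
  move=> K idK AK W [OmW WUV]; have [_ [_ [Kdown _]]] := idK.
  apply: (Kdown _ (U `|` V)) => //; apply: idealU => //.
  - by apply: (AK (downset Om U)); [left|split].
  - by apply: (AK (downset Om V)); [right|split].
by have [I [[->|->] yI]] := Ohat_prime idA joinA yUV; [left|right].
Qed.

Lemma Ohat_hat y I : Ohat Om I y -> exists U, I U /\ hat U y.
Proof.
move=> yI; have idI := Ohat_ideal yI; have [IOm [_ [Idown _]]] := idI.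
pose A := [set J | exists U, I U /\ J = downset Om U].
have idA : forall J, A J -> is_ideal Om J by move=> J [U [IU ->]]; apply/downset_ideal/IOm.
have joinA : ideal_join Om A I.
  split => //; split; first by move=> J [U [IU ->]] W [OmW WU]; apply: (Idown _ U).
  by move=> K idK AK W IW; apply: (AK (downset Om W)); [exists W|split => //; apply: IOm].
by have [J [[U [IU ->]] yU]] := Ohat_prime idA joinA yI; exists U.
Qed.

Lemma hat_Ohat y I U : is_ideal Om I -> I U -> hat U y -> Ohat Om I y.
Proof.
move=> idI IU yU; have [_ [_ [Idown _]]] := idI.
by apply: OhatS yU idI _ => W [OmW WU]; apply: (Idown _ U).
Qed.

Lemma hat_iota x U : Om U -> (hat U (iota_hat HOm x) <-> U x).
Proof.
move=> OmU; split; first by move=> [_ [V [[_ VU] Vx]]]; apply: VU.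
by move=> Ux; split; [apply: downset_ideal|exists U; split => //; split].
Qed.

Lemma hat_bigcap y n (V : 'I_n -> set X) : (forall j, Om (V j)) ->
  exists Z, Om Z /\ hat Z y /\ forall j, hat (V j) y -> Z `<=` V j.
Proof.
move=> OmV.
suff /(_ (enum 'I_n)) [Z [OmZ [yZ ZV]]] : forall s : seq 'I_n, exists Z,
    Om Z /\ hat Z y /\ forall j, j \in s -> hat (V j) y -> Z `<=` V j.
  by exists Z; split => //; split => // j; apply: ZV; rewrite mem_enum.
elim=> [|j s [Z [OmZ [yZ ZV]]]]; first by exists setT; split => //; split => //; apply: hatT.
have [yj|nyj] := classic (hat (V j) y).
  exists (Z `&` V j); split; first exact: viable_base_setI.
  split; first exact: hatI.
  move=> i; rewrite in_cons => /orP [/eqP -> _ z []//|si yi z [Zz _]].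
  exact: ZV si yi z Zz.
exists Z; split => //; split => // i; rewrite in_cons => /orP [/eqP -> //|].
exact: ZV.
Qed.

Lemma hat_bigcup y n (V : 'I_n -> set X) : (forall j, Om (V j)) ->
  exists N, Om N /\ ~ hat N y /\ forall j, ~ hat (V j) y -> V j `<=` N.
Proof.
move=> OmV.
suff /(_ (enum 'I_n)) [N [OmN [yN VN]]] : forall s : seq 'I_n, exists N,
    Om N /\ ~ hat N y /\ forall j, j \in s -> ~ hat (V j) y -> V j `<=` N.
  by exists N; split => //; split => // j; apply: VN; rewrite mem_enum.
elim=> [|j s [N [OmN [yN VN]]]]; first by exists set0; split => //; split => //; apply: hat0.
have [yj|nyj] := classic (hat (V j) y).
  exists N; split => //; split => // i; rewrite in_cons => /orP [/eqP -> //|].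
  exact: VN.
exists (N `|` V j); split; first exact: viable_base_setU.
split; first by case/(hatU OmN (OmV j)).
move=> i; rewrite in_cons => /orP [/eqP -> _ z Vz|si yi z Vz]; first by right.
by left; apply: VN si yi z Vz.
Qed.

Lemma iota_agree y n (V : 'I_n -> set X) W : (forall j, Om (V j)) ->
  Om W -> hat W y -> exists x, W x /\ forall j, V j x <-> hat (V j) y.
Proof.
move=> OmV OmW yW.
have [Z [OmZ [yZ ZV]]] := hat_bigcap y OmV.
have [N [OmN [yN VN]]] := hat_bigcup y OmV.
have [x [[Zx Wx] Nx]] : exists x, (Z `&` W) x /\ ~ N x.
  apply: NNPP => noZ; apply: yN; apply: hatS (hatI OmZ OmW yZ yW) _ => //.
  by move=> x ZWx; apply: NNPP => Nx; apply: noZ; exists x.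
exists x; split => // j; split; last by move=> yj; apply: ZV.
by move=> Vx; apply: NNPP => yj; apply: Nx; apply: VN yj x Vx.
Qed.

Definition Om_filter F : Prop :=
  F `<=` Om /\ (forall U V, F U -> Om V -> U `<=` V -> F V) /\
  (forall U V, F U -> F V -> F (U `&` V)).

Lemma prime_filter_point F : Om_filter F -> F setT -> ~ F set0 ->
  (forall U V, Om U -> Om V -> F (U `|` V) -> F U \/ F V) ->
  exists y, forall U, Om U -> (hat U y <-> F U).
Proof.
move=> [FOm [Fup Fcap]] FT F0 Fprime.
pose yv := [set I | is_ideal Om I /\ exists U, I U /\ F U].
have cpf : is_cpf Om yv.
  split; first by move=> I [].
  split; first by exists Om; split; [apply: Om_ideal|exists setT; split => //; apply: FOm].
  split; first by move=> I J [_ [U [IU FU]]] idJ IJ; split => //; exists U; split => //; apply: IJ.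
  split.
    move=> I J [idI [U [IU FU]]] [idJ [V [JV FV]]]; split; first exact: idealI.
    exists (U `&` V); split; last exact: Fcap.
    have OmUV : Om (U `&` V) by apply: FOm; apply: Fcap.
    have [_ [_ [Idown _]]] := idI; have [_ [_ [Jdown _]]] := idJ.
    by split; [apply: (Idown _ U)|apply: (Jdown _ V)] => // z [].
  move=> A J idA [idJ [_ Jleast]] [_ [U [JU FU]]]; apply: NNPP => noA.
  pose K := [set V | Om V /\ ~ F V].
  have idK : is_ideal Om K.
    split; first by move=> V [].
    split; first by exists set0; split.
    split; first by move=> V V' [OmV' nFV'] OmV VV'; split => // FV; apply: nFV'; apply: (Fup V).
    move=> V1 V2 [Om1 nF1] [Om2 nF2]; exists (V1 `|` V2).
    split; first by split; [apply: viable_base_setU|case/Fprime].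
    by split=> z Hz; [left|right].
  have : J `<=` K.
    apply: Jleast => // I AI V IV; split; first by have [+ _] := idA I AI; apply.
    by move=> FV; apply: noA; exists I; split => //; split; [apply: idA|exists V].
  by move=> /(_ U JU) [].
exists (exist _ yv cpf) => U OmU; split; first by move=> [_ [V [[OmV VU] FV]]]; apply: (Fup V).
by move=> FU; split; [apply: downset_ideal|exists U; split => //; split].
Qed.

Section Separation.
Variables (K : set (set X)) (W : set X).
Hypotheses (idK : is_ideal Om K) (OmW : Om W) (nKW : ~ K W).

(* The last clause lets the empty family, the union of the empty chain,
   satisfy the predicate, as Zorn's lemma requires. *)
Definition filter_avoiding F : Prop :=
  Om_filter F /\ (forall U, F U -> ~ K U) /\ (forall U, F U -> F W).

Lemma filter_avoiding_maximal :
  exists F, filter_avoiding F /\ forall G, F `<` G -> ~ filter_avoiding G.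
Proof.
apply: Zorn_bigcup => C CP Ctot; split.
  split; first by move=> U [F CF FU]; have [[FOm _] _] := CP F CF; apply: FOm.
  split.
    move=> U V [F CF FU] OmV UV; exists F => //.
    by have [[_ [Fup _]] _] := CP F CF; apply: Fup FU OmV UV.
  move=> U V [F CF FU] [G CG GV].
  have [FG|GF] := Ctot F G CF CG.
    by exists G => //; have [[_ [_ Gcap]] _] := CP G CG; apply: Gcap (FG U FU) GV.
  by exists F => //; have [[_ [_ Fcap]] _] := CP F CF; apply: Fcap FU (GF V GV).
split; first by move=> U [F CF FU]; have [_ [FK _]] := CP F CF; apply: FK.
by move=> U [F CF FU]; exists F => //; have [_ [_ FW]] := CP F CF; apply: FW FU.
Qed.

Section MaximalFilter.
Variable F : set (set X).
Hypotheses (avF : filter_avoiding F)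
  (maxF : forall G, F `<` G -> ~ filter_avoiding G).

Lemma maximal_filter_avoiding_W : F W.
Proof.
have [_ [_ [Kdown _]]] := idK.
have [_ [_ FW]] := avF; apply: NNPP => nFW; have F0 U : ~ F U by move/FW.
apply: (maxF (G := [set V | Om V /\ W `<=` V])).
  by split; [move=> U /F0 []|move=> /(_ W) WF; apply: nFW; apply: WF; split].
split; [split|split].
- by move=> U [].
- split; first by move=> U V [_ WU] OmV UV; split => // z /WU /UV.
  move=> U V [OmU WU] [OmV WV]; split; first exact: viable_base_setI.
  by move=> z Wz; split; [apply: WU|apply: WV].
- by move=> U [OmU WU] KU; apply: nKW; apply: (Kdown _ U).
- by move=> U _; split.
Qed.

(* Adjoining a basic open outside F would give a larger filter, which by
   maximality must meet K. *)
Lemma maximal_filter_avoiding_meet U : Om U -> ~ F U ->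
  exists Z s, K Z /\ F s /\ s `&` U `<=` Z.
Proof.
have [[FOm [Fup Fcap]] [FK _]] := avF.
have FW := maximal_filter_avoiding_W; move=> OmU nFU; apply: NNPP => noK.
pose G := [set Z | Om Z /\ exists s, F s /\ s `&` U `<=` Z].
apply: (maxF (G := G)).
  split; first by move=> Z FZ; split; [apply: FOm|exists Z; split => // z []].
  by move=> /(_ U) GF; apply: nFU; apply: GF; split => //; exists W; split => // z [].
split; [split|split].
- by move=> Z [].
- split.
    move=> Z Z' [_ [s [Fs sZ]]] OmZ' ZZ'; split => //.
    by exists s; split => // z /sZ /ZZ'.
  move=> Z Z' [OmZ [s [Fs sZ]]] [OmZ' [s' [Fs' sZ']]]; split; first exact: viable_base_setI.
  exists (s `&` s'); split; first exact: Fcap.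
  by move=> z [[sz s'z] Uz]; split; [apply: sZ|apply: sZ'].
- by move=> Z [_ [s [Fs sZ]]] KZ; apply: noK; exists Z, s.
- by move=> Z _; split => //; exists W; split => // z [].
Qed.

Lemma maximal_filter_avoiding_prime U V : Om U -> Om V -> F (U `|` V) ->
  F U \/ F V.
Proof.
have [[FOm [_ Fcap]] [FK _]] := avF; move=> OmU OmV FUV; apply: NNPP => nF.
have [Z1 [s1 [KZ1 [Fs1 sZ1]]]] :=
  maximal_filter_avoiding_meet OmU (fun FU => nF (or_introl FU)).
have [Z2 [s2 [KZ2 [Fs2 sZ2]]]] :=
  maximal_filter_avoiding_meet OmV (fun FV => nF (or_intror FV)).
have Fs : F ((s1 `&` s2) `&` (U `|` V)) by apply: (Fcap) => //; apply: Fcap.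
apply: (FK _ Fs); have [_ [_ [Kdown _]]] := idK.
apply: (Kdown _ (Z1 `|` Z2)); [exact: idealU|exact: FOm _ Fs|].
by move=> z [[s1z s2z] [Uz|Vz]]; [left; apply: sZ1|right; apply: sZ2].
Qed.

End MaximalFilter.

(* The prime filter theorem for the lattice Om, phrased on the spectrum. *)
Lemma Xhat_separation : exists y, hat W y /\ forall U, hat U y -> ~ K U.
Proof.
have [KOm _] := idK.
have [F [avF maxF]] := filter_avoiding_maximal.
have FW := maximal_filter_avoiding_W avF maxF.
have [[FOm [Fup _]] [FK _]] := avF.
have [y yF] := prime_filter_point (proj1 avF) (Fup _ _ FW viable_base_setT (@subsetT _ W))
  (fun Fset0 => FK _ Fset0 (ideal0 idK)) (maximal_filter_avoiding_prime avF maxF).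
exists y; split; first exact/(yF _ OmW).
by move=> U yU KU; apply: (FK _ _ KU); apply/(yF _ (KOm _ KU)).
Qed.
End Separation.

End Spectrum.

Arguments hat {X} Om U _.

Section StepFunctions.
Context {d : Order.disp_t} {D : bPOrderType d}.
Variables (X : topologicalType) (Om : set (set X)).
Hypothesis HOm : viable_base Om.
Implicit Types (f g h : Xhat Om -> D).

Notation iota := (iota_hat HOm).

Definition locally_above f : Prop :=
  forall z, exists I, is_ideal Om I /\ Ohat Om I z /\
    forall w, Ohat Om I w -> leD (f z) (f w).

Lemma locally_above_cont f : locally_above f -> cont_hat Om f.
Proof.
move=> fabove U [Uup _] y /= Ufy; have [I [idI [yI fI]]] := fabove y.
by exists I; split => //; split => // w wI; apply: Uup Ufy (fI w wI).
Qed.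

Section StepJoin.
Variables (n : nat) (b : 'I_n -> D) (W : 'I_n -> set X) (f : Xhat Om -> D).
Hypotheses (OmW : forall i, Om (W i)) (f_step : is_step_join b (fun i => hat Om (W i)) f).

Lemma step_join_locally_above : locally_above f.
Proof.
move=> z; have [Z [OmZ [zZ ZW]]] := hat_bigcap HOm z OmW.
exists (downset Om Z); split; first exact: downset_ideal.
split => // w wZ; apply: (dlub_least (f_step z)) => c [i [zWi ->]].
apply: (dlub_ub (f_step w)); exists i; split => //.
exact: (hatS HOm (OmW i) (wZ : hat Om Z w) (ZW i zWi)).
Qed.

Lemma step_join_iota x : dlub [set c | exists i, W i x /\ c = b i] (f (iota x)).
Proof.
have -> : [set c | exists i, W i x /\ c = b i] =
          [set c | exists i, hat Om (W i) (iota x) /\ c = b i].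
  by apply/seteqP; split => c [i [Wix ->]]; exists i; split => //; apply/(hat_iota HOm x (OmW i)).
exact: f_step.
Qed.

Lemma step_join_iota_le x y : (forall i, W i x -> hat Om (W i) y) -> leD (f (iota x)) (f y).
Proof.
move=> xy; apply: (dlub_least (step_join_iota x)) => c [i [Wix ->]].
by apply: (dlub_ub (f_step y)); exists i; split => //; apply: xy.
Qed.

Lemma step_join_gamma : consistent_family b (fun i => hat Om (W i)) ->
  consistent_family b W /\ is_step_join b W (f \o iota).
Proof.
move=> bcons; split; last exact (step_join_iota).
move=> J [x Jx]; apply: bcons; exists (iota x) => j Jj.
by apply/(hat_iota HOm x (OmW j)); apply: Jx.
Qed.

End StepJoin.

Lemma step_join_le_of_iota n (b : 'I_n -> D) (W : 'I_n -> set X) f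
    m (c : 'I_m -> D) (V : 'I_m -> set X) g :
  (forall i, Om (W i)) -> is_step_join b (fun i => hat Om (W i)) f ->
  (forall j, Om (V j)) -> is_step_join c (fun j => hat Om (V j)) g ->
  (forall x, f (iota x) = g (iota x)) -> forall y, leD (f y) (g y).
Proof.
move=> OmW f_step OmV g_step fg y; apply: (dlub_least (f_step y)) => e [i [yWi ->]].
have [x [Wix xV]] := iota_agree HOm OmV (OmW i) yWi.
apply: (leD_trans (y := f (iota x))).
  by apply: (dlub_ub (step_join_iota OmW f_step x)); exists i.
by rewrite fg; apply: (step_join_iota_le OmV g_step) => j /xV.
Qed.

Lemma step_join_lift n (b : 'I_n -> D) (O : 'I_n -> set X) (h : X -> D) :
  @bounded_complete _ D -> (forall i, Om (O i)) -> consistent_family b O ->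
  is_step_join b O h -> exists f,
    consistent_family b (fun i => hat Om (O i)) /\
    is_step_join b (fun i => hat Om (O i)) f /\ forall x, f (iota x) = h x.
Proof.
move=> bc OmO bcons h_step.
have lub_ex y : exists s, dlub [set c | exists i, hat Om (O i) y /\ c = b i] s.
  apply: bc; have [x [_ xO]] := iota_agree HOm OmO (viable_base_setT HOm) (hatT HOm y).
  have [u bu] := bcons [set j | hat Om (O j) y] (ex_intro _ x (fun j yj => (xO j).2 yj)).
  by exists u => a [i [yi ->]]; apply: bu.
pose f y := proj1_sig (cid (lub_ex y)).
have f_step : is_step_join b (fun i => hat Om (O i)) f by move=> y; rewrite /f; case: cid.
exists f; split.
  move=> J [y Jy]; exists (f y) => j Jj.
  by apply: (dlub_ub (f_step y)); exists j; split => //; apply: Jy.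
by split => // x; apply: dlub_unique (step_join_iota OmO f_step x) (h_step x).
Qed.

Lemma directed_eval (A : set (Xhat Om -> D)) y :
  directed_rel (@fle _ D _) A -> directed_rel leD [set e | exists a, A a /\ e = a y].
Proof.
move=> [[a0 Aa0] dirA]; split; first by exists (a0 y), a0.
move=> _ _ [a1 [Aa1 ->]] [a2 [Aa2 ->]]; have [a [Aa [le1 le2]]] := dirA _ _ Aa1 Aa2.
by exists (a y); split; [exists a|split; [apply: le1|apply: le2]].
Qed.

Lemma pointwise_dlub_cont (A : set (Xhat Om -> D)) P :
  A `<=` cont_hat Om -> directed_rel (@fle _ D _) A ->
  (forall y, dlub [set e | exists a, A a /\ e = a y] (P y)) -> cont_hat Om P.
Proof.
move=> Acont dirA lubP U [Uup Udir] y /= UPy.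
have [_ [[a [Aa ->]] Uay]] := Udir _ (directed_eval y dirA) _ (lubP y) UPy.
have [I [idI [yI Isub]]] := Acont a Aa U (conj Uup Udir) y Uay.
exists I; split => //; split => // w wI /=.
by apply: Uup (Isub w wI) _; apply: (dlub_ub (lubP w)); exists a.
Qed.

Variable D0 : set D.
Hypothesis basisD0 : is_basis D0.

(* The basic opens on which [e] is dominated by a single member of A form an
   ideal K.  If K missed O, a point y of hat O avoiding K would give, through a
   point x of O agreeing with y on the V_j, [e << g (iota x) <= g y <= P y],
   so by continuity some member of A stays above [e] on a basic neighbourhood
   of y, which then lies in K. *)
Lemma way_below_step_dominated (A : set (Xhat Om -> D)) P g
    m (c : 'I_m -> D) (V : 'I_m -> set X) (e : D) (O : set X) :
  A `<=` cont_hat Om -> directed_rel (@fle _ D _) A ->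
  (forall y, dlub [set e | exists a, A a /\ e = a y] (P y)) ->
  (forall j, Om (V j)) -> is_step_join c (fun j => hat Om (V j)) g -> fle g P ->
  Om O -> (forall x, O x -> way_below e (g (iota x))) ->
  exists a, A a /\ forall y, hat Om O y -> leD e (a y).
Proof.
move=> Acont dirA lubP OmV g_step gP OmO eg; have [[a0 Aa0] dir2] := dirA.
pose K := [set U | Om U /\ exists a, A a /\ forall y, hat Om U y -> leD e (a y)].
have idK : is_ideal Om K.
  split; first by move=> U [].
  split; first by exists set0; split; [exact: viable_base_set0|exists a0; split => // y /hat0].
  split.
    move=> U U' [OmU' [a [Aa ea]]] OmU UU'; split => //; exists a; split => // y yU.
    exact/ea/(hatS HOm OmU' yU UU').
  move=> U1 U2 [Om1 [a1 [Aa1 ea1]]] [Om2 [a2 [Aa2 ea2]]].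
  have [a [Aa [le1 le2]]] := dir2 _ _ Aa1 Aa2.
  exists (U1 `|` U2); split; last by split => z Hz; [left|right].
  split; first exact: viable_base_setU.
  exists a; split => // y /(hatU HOm Om1 Om2) [y1|y2].
  - exact: leD_trans (ea1 y y1) (le1 y).
  - exact: leD_trans (ea2 y y2) (le2 y).
suff [_ [a [Aa ea]]] : K O by exists a.
apply: NNPP => nKO.
have [y0 [y0O y0K]] := Xhat_separation HOm idK OmO nKO.
have [x [Ox xV]] := iota_agree HOm OmV OmO y0O.
have eP : way_below e (P y0).
  apply: way_below_le_trans (eg x Ox) _; apply: leD_trans (gP y0).
  by apply: (step_join_iota_le OmV g_step) => j /xV.
have e_open := way_below_scott_open basisD0 e.
have [_ [[a [Aa ->]] ea]] := e_open.2 _ (directed_eval y0 dirA) _ (lubP y0) eP.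
have [I [idI [y0I Isub]]] := Acont a Aa _ e_open y0 ea.
have [U [IU y0U]] := Ohat_hat HOm y0I.
apply: (y0K U y0U); split; first by have [+ _] := idI; apply.
by exists a; split => // w wU; apply: way_below_le; apply: Isub w (hat_Ohat idI IU wU).
Qed.

Lemma step_way_below_fs n (b : 'I_n -> D) (O : 'I_n -> set X) f
    m (c : 'I_m -> D) (V : 'I_m -> set X) g :
  @is_dcpo _ D ->
  (forall i, Om (O i)) -> is_step_join b (fun i => hat Om (O i)) f ->
  (forall j, Om (V j)) -> is_step_join c (fun j => hat Om (V j)) g ->
  (forall i x, O i x -> way_below (b i) (g (iota x))) -> way_below_fs Om f g.
Proof.
move=> dcpo OmO f_step OmV g_step bg A Acont dirA s lub_s gs.
have /choice [P lubP] : forall y, exists t, dlub [set e | exists a, A a /\ e = a y] t.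
  by move=> y; apply/dcpo/directed_eval.
have sP : fle s P.
  apply: lub_s.2.2; first exact: pointwise_dlub_cont lubP.
  by move=> a Aa y; apply: (dlub_ub (lubP y)); exists a.
have gP : fle g P by move=> y; apply: leD_trans (gs y) (sP y).
have /choice [a aP] : forall i, exists a, A a /\ forall y, hat Om (O i) y -> leD (b i) (a y).
  by move=> i; apply: (way_below_step_dominated Acont dirA lubP OmV g_step gP (OmO i)) => x /bg.
have fle_trans : forall h1 h2 h3 : Xhat Om -> D, fle h1 h2 -> fle h2 h3 -> fle h1 h3.
  by move=> h1 h2 h3 le12 le23 y; apply: leD_trans (le12 y) (le23 y).
have [a' [Aa' aa']] := directed_finite_ub fle_trans dirA (fun i => (aP i).1).
exists a'; split => // y; apply: (dlub_least (f_step y)) => e [i [yOi ->]].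
exact: leD_trans ((aP i).2 y yOi) (aa' i y).
Qed.

Definition approximants g : set (Xhat Om -> D) :=
  [set h | locally_above h /\ forall z, way_below (h z) (g z)].

Lemma approximants_directed g : @bounded_complete _ D -> directed_rel (@fle _ D _) (approximants g).
Proof.
move=> bc; split.
  exists (fun _ => \bot%O); split; last by move=> z; apply: way_below_bot.
  move=> z; exists Om; split; first exact: Om_ideal.
  by split; [apply: Ohat_Om|move=> w _; apply: leD_bot].
move=> h1 h2 [above1 hg1] [above2 hg2].
have /choice [h lubh] : forall z, exists t, dlub [set e | e = h1 z \/ e = h2 z] t.
  by move=> z; apply: bc; exists (g z) => e [->|->]; apply: way_below_le.
exists h; split; last by split => z; apply: (dlub_ub (lubh z)); [left|right].
split; last by move=> z; apply: way_below_join (hg1 z) (hg2 z) (lubh z).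
move=> z; have [I1 [idI1 [zI1 le1]]] := above1 z; have [I2 [idI2 [zI2 le2]]] := above2 z.
exists (I1 `&` I2); split; first exact: idealI.
split; first exact: OhatI.
move=> w wI; apply: (dlub_least (lubh z)) => e [->|->].
- apply: leD_trans (le1 w (OhatS wI idI1 (fun _ p => p.1))) _.
  by apply: (dlub_ub (lubh w)); left.
- apply: leD_trans (le2 w (OhatS wI idI2 (fun _ p => p.2))) _.
  by apply: (dlub_ub (lubh w)); right.
Qed.

(* Below [g z], the basis elements [e << g z] are reached by the steps
   [e] on a neighbourhood of [z] and [\bot] elsewhere. *)
Lemma approximants_lub g : locally_above g ->
  is_lub_in (@fle _ D _) (cont_hat Om) (approximants g) g.
Proof.
move=> gabove; split; first exact: locally_above_cont.
split; first by move=> h [_ hg] z; apply: way_below_le.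
move=> u _ ubu z; have [_ lubg] := basisD0 (g z).
apply: (dlub_least lubg) => e [_ eg]; have [I [idI [zI Ig]]] := gabove z.
pose s w : D := if `[< Ohat Om I w >] then e else \bot%O.
suff /ubu/(_ z) : approximants g s by rewrite /s; case: asboolP.
split.
  move=> w; rewrite /s; case: asboolP => wI.
    by exists I; split => //; split => // w' w'I; case: asboolP => // _; apply: leD_refl.
  exists Om; split; first exact: Om_ideal.
  by split; [apply: Ohat_Om|move=> w' _; apply: leD_bot].
move=> w; rewrite /s; case: asboolP => wI; last exact: way_below_bot.
exact: way_below_le_trans eg (Ig w wI).
Qed.

Lemma way_below_fs_pointwise f g : @bounded_complete _ D -> locally_above g ->
  way_below_fs Om f g -> forall y, way_below (f y) (g y).
Proof.
move=> bc gabove fg y.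
have [h [[_ hg] fh]] := fg _ (fun h (hA : approximants g h) => locally_above_cont hA.1)
  (approximants_directed g bc) g (approximants_lub gabove) (fun t => leD_refl _).
exact: le_way_below_trans (fh y) (hg y).
Qed.

Lemma Bhat_Babs f : in_Bhat Om D0 f -> in_Babs Om D0 (f \o iota).
Proof.
move=> [n [b [W [bW [bcons f_step]]]]]; exists n, b, W; split => //.
by apply: (step_join_gamma _ f_step bcons) => i; case: (bW i).
Qed.

Lemma Bhat_iota_inj f g : in_Bhat Om D0 f -> in_Bhat Om D0 g ->
  (forall x, f (iota x) = g (iota x)) -> f = g.
Proof.
move=> [n [b [W [bW [_ f_step]]]]] [m [c [V [cV [_ g_step]]]]] fg.
have OmW i := (bW i).1; have OmV j := (cV j).1.
apply: funext => y; apply: leD_anti; first exact: step_join_le_of_iota f_step OmV g_step fg y.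
by apply: (step_join_le_of_iota OmV g_step OmW f_step) => x; rewrite fg.
Qed.

Lemma Babs_lift (h : X -> D) : @bounded_complete _ D -> in_Babs Om D0 h ->
  exists f, in_Bhat Om D0 f /\ f \o iota = h.
Proof.
move=> bc [n [b [O [bO [bcons h_step]]]]]; have OmO i := (bO i).1.
have [f [fcons [f_step fh]]] := step_join_lift bc OmO bcons h_step.
by exists f; split; [exists n, b, O|apply: funext].
Qed.

Lemma way_below_fs_prec f g : @bounded_complete _ D ->
  in_Bhat Om D0 f -> in_Bhat Om D0 g ->
  way_below_fs Om f g -> prec_abs Om D0 (f \o iota) (g \o iota).
Proof.
move=> bc [n [b [W [bW [bcons f_step]]]]] [m [c [V [cV [_ g_step]]]]] fg.
have OmW i := (bW i).1; have OmV j := (cV j).1.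
have [gcons gf_step] := step_join_gamma OmW f_step bcons.
exists n, b, W; do 3!split => //; move=> i x Wix /=.
have gabove := step_join_locally_above OmV g_step.
apply: (le_way_below_trans _ (way_below_fs_pointwise bc gabove fg (y := iota x))).
by apply: (dlub_ub (gf_step x)); exists i.
Qed.

Lemma prec_way_below_fs f g : @is_dcpo _ D -> @bounded_complete _ D ->
  in_Bhat Om D0 f -> in_Bhat Om D0 g ->
  prec_abs Om D0 (f \o iota) (g \o iota) -> way_below_fs Om f g.
Proof.
move=> dcpo bc Bf [m [c [V [cV [_ g_step]]]]] [n [b [O [bO [bcons [h_step bg]]]]]].
have OmV j := (cV j).1; have OmO i := (bO i).1.
have [f' [f'cons [f'_step f'f]]] := step_join_lift bc OmO bcons h_step.
have Bf' : in_Bhat Om D0 f' by exists n, b, O.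
have -> : f = f' by apply: Bhat_iota_inj => // x; rewrite f'f.
exact (step_way_below_fs dcpo OmO f'_step OmV g_step bg).
Qed.

End StepFunctions.

Theorem mainTheorem18 (X : topologicalType) (Om : set (set X))
    (HOm : viable_base Om)
    (d : Order.disp_t) (D : bPOrderType d) (D0 : set D)
    (HD : is_bc_domain D0) :
  let gamma := fun f : Xhat Om -> D => f \o iota_hat HOm in
  (forall f, in_Bhat Om D0 f -> in_Babs Om D0 (gamma f)) /\
  (forall f g, in_Bhat Om D0 f -> in_Bhat Om D0 g -> gamma f = gamma g -> f = g) /\
  (forall h, in_Babs Om D0 h -> exists f, in_Bhat Om D0 f /\ gamma f = h) /\
  (forall n (b : 'I_n -> D) (W : 'I_n -> set X) (f : Xhat Om -> D),
     (forall i, Om (W i) /\ D0 (b i)) ->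
     consistent_family b (fun i => Ohat Om (downset Om (W i))) ->
     is_step_join b (fun i => Ohat Om (downset Om (W i))) f ->
     consistent_family b W /\ is_step_join b W (gamma f)) /\
  (forall f g, in_Bhat Om D0 f -> in_Bhat Om D0 g ->
     (way_below_fs Om f g <-> prec_abs Om D0 (gamma f) (gamma g))).
Proof.
move=> gamma; rewrite {}/gamma; have [dcpo [basisD0 bc]] := HD.
split; first exact: Bhat_Babs.
split.
  by move=> f g Bf Bg fg; apply: (Bhat_iota_inj Bf Bg) => x; apply: (congr1 (@^~ x) fg).
split; first by move=> h; apply: Babs_lift.
split.
  move=> n b W f bW bcons f_step.
  by apply: (step_join_gamma HOm _ f_step bcons) => i; case: (bW i).
by move=> f g Bf Bg; split; [apply: way_below_fs_prec|apply: prec_way_below_fs].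
Qed.
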